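(* Let $X$ be a totally ordered set of distinct elements, let $k \ge 2$ and $1\le t\le k$ with $t \ne (k+1)/2$, and consider the $(k,t)$ scale which on input any $k$-element subset of $X$ returns its $t$-th smallest element. Let $S$ be the set of the $t-1$ smallest elements of $X$ and $L$ the set of the $k-t$ largest elements of $X$. Let $z_1,\ldots,z_{k+1}$ be $k+1$ fixed elements of $X$. Then by querying all $\binom{k+1}{k}$ $k$-element subsets of $\{z_1,\ldots,z_{k+1}\}$ one can find two of them, $x$ and $y$, such that $x,y \notin S\cup L$ and one knows that $x < y$.
   Context: The condition $t \neq (k+1)/2$ means the scale is asymmetric (not invariant under reversing the order). *)

From mathcomp Require Import all_boot.
Set Implicit Arguments. Unset Strict Implicit. Unset Printing Implicit Defensive.

(* A total (strict) order on the finite ground set X = T is given by an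
   injective ranking r : T -> nat : x < y iff r x < r y. *)

Definition scale (T : finType) (r : T -> nat) (t : nat) (A : {set T}) : option T :=
  [pick a in A | #|[set b in A | r b < r a]| == t.-1].

Definition smallS (T : finType) (r : T -> nat) (t : nat) : {set T} :=
  [set x | #|[set y | r y < r x]| < t.-1].

Definition largeL (T : finType) (r : T -> nat) (k t : nat) : {set T} :=
  [set x | #|[set y | r x < r y]| < k - t].

(* Answers available to the algorithm: the scale's answers on exactly the
   k-element subsets of Z; no information on other sets. *)
Definition answers (T : finType) (r : T -> nat) (k t : nat) (Z : {set T})
  (A : {set T}) : option T :=
  if (A \subset Z) && (#|A| == k) then scale r t A else None.

From mathcomp Require Import all_boot zify.
Set Implicit Arguments. Unset Strict Implicit. Unset Printing Implicit Defensive.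

(* Query Z minus one element v, for every v in Z (|Z| = k+1).  With a and b the
   t-th and (t+1)-th smallest elements of Z, the answer is a when v lies above
   a and b otherwise, so a is returned k+1-t times and b exactly t times.
   Since t <> k+1-t, the answer counts tell which of the two is the smaller
   one, and neither can be among the t-1 smallest or k-t largest elements of
   X, because Z already supplies enough elements below and above each. *)

Definition votes {T : finType} (f : {set T} -> option T) (Z : {set T}) (u : T) :=
  #|[set v in Z | f (Z :\ v) == Some u]|.

Lemma pick_in_unique (T : finType) (A : {set T}) (P : pred T) x0 w :
  w \in A -> (forall u, u \in A -> P u = (u == w)) ->
  odflt x0 [pick u in A | P u] = w.
Proof.
move=> wA Pw; case: pickP => [u /andP[uA] /=|noP]; first by rewrite Pw // => /eqP.
by move: (noP w); rewrite /= wA Pw // eqxx.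
Qed.

Section Ranks.
Variables (T : finType) (r : T -> nat).
Hypothesis r_inj : injective r.

Definition rk (A : {set T}) u := #|[set b in A | r b < r u]|.

Lemma rk_mono {A : {set T}} {u v} : u \in A -> r u < r v -> rk A u < rk A v.
Proof.
move=> uA ruv; apply: proper_card; apply/properP; split.
  by apply/subsetP => b; rewrite !inE => /andP[-> /ltn_trans->].
by exists u; rewrite !inE ?uA ?ruv // ltnn.
Qed.

Lemma rk_lt {A : {set T}} {u v} :
  u \in A -> v \in A -> (rk A u < rk A v) = (r u < r v).
Proof.
move=> uA vA; case: (ltngtP (r u) (r v)) => ruv.
- exact: rk_mono.
- by apply/negbTE; rewrite -leqNgt ltnW // rk_mono.
- by rewrite (r_inj ruv) ltnn.
Qed.

Lemma rk_inj {A : {set T}} {u v} : u \in A -> v \in A -> rk A u = rk A v -> u = v.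
Proof.
move=> uA vA e; case: (ltngtP (r u) (r v)) => ruv; last exact: r_inj.
- by have := rk_mono uA ruv; rewrite e ltnn.
- by have := rk_mono vA ruv; rewrite e ltnn.
Qed.

Lemma rk_lt_card (A : {set T}) u : u \in A -> rk A u < #|A|.
Proof.
move=> uA; rewrite (cardsD1 u A) uA add1n ltnS; apply: subset_leq_card.
apply/subsetP => b; rewrite !inE => /andP[-> rbu]; rewrite andbT.
by apply: contraTneq rbu => ->; rewrite ltnn.
Qed.

Lemma rk_onto (A : {set T}) m : m < #|A| -> exists2 u, u \in A & rk A u = m.
Proof.
move=> mA; set s := [seq rk A u | u <- enum A].
have s_uniq : uniq s.
  by rewrite map_inj_in_uniq ?enum_uniq // => u v; rewrite !mem_enum; apply: rk_inj.
have s_sub : {subset s <= iota 0 #|A|}.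
  move=> x /mapP[u]; rewrite mem_enum mem_iota add0n => uA ->.
  exact: rk_lt_card.
have s_size : size (iota 0 #|A|) <= size s by rewrite size_iota size_map -cardE.
have [_ s_eq] := uniq_min_size s_uniq s_sub s_size.
have : m \in s by rewrite s_eq mem_iota.
by case/mapP => u; rewrite mem_enum => uA ->; exists u.
Qed.

Lemma card_rk_lt {A : {set T}} {m} : m < #|A| -> #|[set v in A | rk A v < m]| = m.
Proof.
case/rk_onto=> w wA <-; rewrite [RHS]/rk; apply: eq_card => v; rewrite !inE.
by case vA: (v \in A); rewrite //= rk_lt.
Qed.

Lemma card_rk_ge (A : {set T}) m :
  m < #|A| -> #|[set v in A | m <= rk A v]| = #|A| - m.
Proof.
move=> mA; have low : A :&: [set v | rk A v < m] = [set v in A | rk A v < m].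
  by apply/setP => v; rewrite !inE.
have high : A :\: [set v | rk A v < m] = [set v in A | m <= rk A v].
  by apply/setP => v; rewrite !inE -leqNgt andbC.
by have := cardsID [set v | rk A v < m] A; rewrite low high card_rk_lt //; lia.
Qed.

Lemma rk_le_card_below (A : {set T}) u : rk A u <= #|[set y | r y < r u]|.
Proof. by apply: subset_leq_card; apply/subsetP => y; rewrite !inE => /andP[]. Qed.

Lemma card_above_rk (A : {set T}) u :
  u \in A -> #|A| - (rk A u).+1 <= #|[set y | r u < r y]|.
Proof.
move=> uA; have [|u_low] := leqP #|A| (rk A u).+1.
  by rewrite -subn_eq0 => /eqP->.
rewrite -card_rk_ge //; apply: subset_leq_card.
by apply/subsetP => y; rewrite !inE => /andP[yA]; rewrite rk_lt.
Qed.

Lemma rkD1 (A : {set T}) v w : v \in A -> rk (A :\ v) w = rk A w - (r v < r w).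
Proof.
move=> vA; rewrite /rk.
have -> : [set b in A :\ v | r b < r w] = [set b in A | r b < r w] :\ v.
  by apply/setP => b; rewrite !inE andbA.
by rewrite (cardsD1 v [set b in A | r b < r w]) !inE vA /= addKn.
Qed.

Lemma scale_rk (A : {set T}) w t : w \in A -> rk A w = t.-1 -> scale r t A = Some w.
Proof.
move=> wA rkw; rewrite /scale; case: pickP => [a /andP[aA /eqP rka] | noP].
  by congr Some; apply: rk_inj aA wA _; rewrite rkw.
by move: (noP w); rewrite wA -[X in X == _]/(rk A w) rkw eqxx.
Qed.

Lemma scaleD1 (A : {set T}) t a b v : 0 < t ->
  a \in A -> b \in A -> rk A a = t.-1 -> rk A b = t -> v \in A ->
  scale r t (A :\ v) = Some (if t <= rk A v then a else b).
Proof.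
move=> t_gt0 aA bA rka rkb vA; case: leqP => [t_le_v | v_lt_t].
  have r_va : (r v < r a) = false by rewrite -(rk_lt vA aA) rka; apply/negbTE; lia.
  apply: scale_rk; last by rewrite rkD1 // r_va rka subn0.
  by rewrite !inE aA andbT; apply: contraTneq t_le_v => <-; rewrite rka; lia.
have r_vb : r v < r b by rewrite -(rk_lt vA bA) rkb.
apply: scale_rk; last by rewrite rkD1 // r_vb rkb subn1.
by rewrite !inE bA andbT; apply: contraTneq v_lt_t => <-; rewrite rkb ltnn.
Qed.

Lemma votes_answers (Z : {set T}) k t a b u :
  #|Z| = k.+1 -> 0 < t <= k -> a \in Z -> b \in Z -> rk Z a = t.-1 -> rk Z b = t ->
  votes (answers r k t Z) Z u =
    if u == a then k.+1 - t else if u == b then t else 0.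
Proof.
move=> cardZ /andP[t_gt0 t_le_k] aZ bZ rka rkb.
have a_neq_b : a != b by apply/eqP => ab; move: rka; rewrite ab rkb; lia.
have answerD1 v : v \in Z ->
    answers r k t Z (Z :\ v) = Some (if t <= rk Z v then a else b).
  move=> vZ; rewrite /answers subsetDl -(scaleD1 t_gt0 aZ bZ rka rkb vZ).
  by have := cardsD1 v Z; rewrite vZ cardZ => -[->]; rewrite eqxx.
have votesE w (P : pred T) :
    (forall v, v \in Z -> P v = ((if t <= rk Z v then a else b) == w)) ->
    votes (answers r k t Z) Z w = #|[set v in Z | P v]|.
  move=> PE; apply: eq_card => v; rewrite !inE.
  by case vZ: (v \in Z); rewrite //= answerD1 // (inj_eq Some_inj) PE.
have [-> | u_neq_a] := eqVneq u a.
  rewrite (votesE _ (fun v => t <= rk Z v)) => [|v _]; first by rewrite card_rk_ge ?cardZ.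
  by case: ifP; rewrite ?eqxx // eq_sym (negbTE a_neq_b).
have [-> | u_neq_b] := eqVneq u b.
  rewrite (votesE _ (fun v => rk Z v < t)) => [|v _]; first by rewrite card_rk_lt ?cardZ.
  by rewrite ltnNge; case: ifP; rewrite ?eqxx // (negbTE a_neq_b).
rewrite (votesE _ pred0) => [|v _]; first by apply: eq_card0 => v; rewrite !inE andbF.
by case: ifP => _; apply/esym/eqP => e; rewrite e eqxx in u_neq_a u_neq_b.
Qed.

Lemma votes_answers_eq (Z : {set T}) k t a b u :
  #|Z| = k.+1 -> 0 < t <= k -> t != k.+1 - t ->
  a \in Z -> b \in Z -> rk Z a = t.-1 -> rk Z b = t ->
  ((votes (answers r k t Z) Z u == k.+1 - t) = (u == a)) *
  ((votes (answers r k t Z) Z u == t) = (u == b)).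
Proof.
move=> cardZ t_range t_neq aZ bZ rka rkb.
rewrite (votes_answers u cardZ t_range aZ bZ rka rkb).
have a_neq_b : a != b by apply/eqP => ab; move: rka; rewrite ab rkb; lia.
have [-> | u_neq_a] := eqVneq u a.
  by rewrite (negbTE a_neq_b) eq_sym eqxx (negbTE t_neq).
have [_ | u_neq_b] := eqVneq u b; first by rewrite (negbTE t_neq) eqxx.
by move: t_range => /andP[? ?]; split; apply/eqP; lia.
Qed.

Lemma notin_extremes (Z : {set T}) k t u : #|Z| = k.+1 -> u \in Z ->
  t.-1 <= rk Z u <= t -> u \notin smallS r t :|: largeL r k t.
Proof.
move=> cardZ uZ /andP[lo hi]; rewrite !inE negb_or -!leqNgt.
rewrite (leq_trans lo (rk_le_card_below _ _)) /=.
by apply: leq_trans (card_above_rk uZ); rewrite cardZ subSS leq_sub2l.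
Qed.

End Ranks.

Theorem lemma1 (T : finType) (k t : nat) (z : 'I_k.+1 -> T) :
  2 <= k -> 1 <= t <= k -> t.*2 != k.+1 -> injective z ->
  exists D : ({set T} -> option T) -> T * T,
    forall r : T -> nat, injective r ->
      let Z := [set z i | i : 'I_k.+1] in
      let xy := D (answers r k t Z) in
      [/\ xy.1 \in Z, xy.2 \in Z,
          xy.1 \notin smallS r t :|: largeL r k t,
          xy.2 \notin smallS r t :|: largeL r k t &
          r xy.1 < r xy.2].
Proof.
move=> _ t_range t_mid z_inj; have /andP[t_gt0 t_le_k] := t_range.
pose Z := [set z i | i : 'I_k.+1].
exists (fun f => (odflt (z ord0) [pick u in Z | votes f Z u == k.+1 - t],
                  odflt (z ord0) [pick u in Z | votes f Z u == t])).
move=> r r_inj /=; rewrite -/Z.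
have cardZ : #|Z| = k.+1 by rewrite card_imset // card_ord.
have [a aZ rka] : exists2 a, a \in Z & rk r Z a = t.-1.
  by apply: rk_onto; rewrite // cardZ; lia.
have [b bZ rkb] : exists2 b, b \in Z & rk r Z b = t.
  by apply: rk_onto; rewrite // cardZ.
have t_neq : t != k.+1 - t by move: t_mid; rewrite -addnn; lia.
rewrite (pick_in_unique _ aZ) ?(pick_in_unique _ bZ) => [|u _|u _].
- split=> //.
  + by apply: (notin_extremes r_inj cardZ aZ); rewrite rka leqnn leq_pred.
  + by apply: (notin_extremes r_inj cardZ bZ); rewrite rkb leqnn leq_pred.
  by rewrite -(rk_lt r_inj aZ bZ) rka rkb prednK.
all: by rewrite (votes_answers_eq r_inj _ cardZ t_range t_neq aZ bZ rka rkb).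
Qed.
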